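(* Let $\Sigma\subseteq\mathbb{C}$ be a nonempty compact set, $L$ a bounded band operator on $\ell^2(\mathbb{Z})$ with $LS=SL$, and $\gamma\in\mathbb{Z}$. Let $b,c\in\Sigma^{\mathbb{N}}$ and let $H(b)^+$, $H(c)^+$ be the corresponding half-axis generalized Schrödinger operators, with band-width $w$. If $N\in\mathbb{N}$ and \[ b|_{1..w+N-1}=c|_{1..w+N-1}\qquad\text{and}\qquad\mathcal{W}_N(b)\subseteq\mathcal{W}_N(c), \] then $\nu_N(H(b)^+)\ge\nu_N(H(c)^+)$.
   Context: $\mathbb{N}=\{1,2,\dots\}$, $a..b:=\{n\in\mathbb{Z}:a\le n\le b\}$, $(Sx)_n=x_{n-1}$, $(M_ux)_n=u_nx_n$. For $u\in\Sigma^{\mathbb{N}}$, $H(u)^+$ is the operator on $\ell^2(\mathbb{N})$ with matrix $(H_{ij})_{i,j\in\mathbb{N}}$, where $(H_{ij})_{i,j\in\mathbb{Z}}$ is the matrix of $L+S^\gamma M_{\tilde u}$ for any extension $\tilde u\in\Sigma^{\mathbb{Z}}$ of $u$ (independent of the extension). The band-width $w$ is such that matrix entries vanish for $|i-j|>w$. $\mathcal{W}_N(u)$ is the set of all length-$N$ subwords $(u(k),\dots,u(k+N-1))$, $k\in\mathbb{N}$. $\nu_N(T):=\inf\{\|Tx\|:\|x\|=1,\ \operatorname{diam}(\operatorname{supp}x)<N\}$. *)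

From HB Require Import structures.
From mathcomp Require Import all_boot all_order all_algebra.
From mathcomp Require Import all_classical all_reals all_analysis.
From mathcomp.real_closed Require Export complex.
Set Implicit Arguments. Unset Strict Implicit. Unset Printing Implicit Defensive.
Import Order.TTheory GRing.Theory Num.Theory.
Export ComplexField.
Export numFieldTopology.Exports numFieldNormedType.Exports.

(* the norm (metric) topology of C = R[i], as for any numFieldType *)
HB.instance Definition _ (R : realType) := PseudoPointedMetric.copy R[i] (R[i])^o.

Local Open Scope classical_set_scope.
Local Open Scope ring_scope.

(* CONVENTION: the half axis N = {1,2,...} is represented by Rocq's nat
   with the shift n |-> n - 1, i.e. index k : nat stands for k+1 in N.
   So a sequence u in Sigma^N is a function u : nat -> C with u k = u(k+1). *)

Section Defs.
Variable R : realType.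
Local Notation C := R[i].

Definition modsq (z : C) : R := complex.Re z ^+ 2 + complex.Im z ^+ 2.

Definition l2norm (x : nat -> C) : R :=
  Num.sqrt (limn (series (fun n => modsq (x n)))).

Definition matapply (T : nat -> nat -> C) (x : nat -> C) : nat -> C :=
  fun i => limn (series (fun j => T i j * x j)).

Definition diam_supp_lt (x : nat -> C) (N : nat) : Prop :=
  forall m n : nat, x m != 0 -> x n != 0 -> (m - n < N)%N.

Definition nu (N : nat) (T : nat -> nat -> C) : R :=
  inf [set l2norm (matapply T x) | x in [set x | l2norm x = 1 /\ diam_supp_lt x N]].

(* matrix (on Z x Z) of  L + S^gamma M_ut  for ut : Z -> C, where L has
   matrix Lm : Z -> Z -> C; (S^gamma M_ut)_{ij} = ut_j if i - j = gamma *)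
Definition Hz (Lm : int -> int -> C) (gamma : int) (ut : int -> C)
  : int -> int -> C :=
  fun i j => Lm i j + (if i - j == gamma then ut j else 0).

Definition extends (ut : int -> C) (u : nat -> C) : Prop :=
  forall k : nat, ut (k.+1)%:Z = u k.

(* H(u)^+ : the N x N part of the matrix of L + S^gamma M_ut, for any
   extension ut of u (it does not depend on the extension) *)
Definition Hplus (Lm : int -> int -> C) (gamma : int) (u : nat -> C)
  : nat -> nat -> C :=
  fun i j => Lm (i.+1)%:Z (j.+1)%:Z
             + (if (i.+1)%:Z - (j.+1)%:Z == gamma then u j else 0).

Definition subwords (N : nat) (u : nat -> C) : set (seq C) :=
  [set mkseq (fun i => u (k + i)%N) N | k in [set: nat]].

End Defs.

From HB Require Import structures.
From mathcomp Require Import all_boot all_order all_algebra.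
From mathcomp Require Import all_classical all_reals all_analysis.
From mathcomp Require Import zify.
Set Implicit Arguments. Unset Strict Implicit. Unset Printing Implicit Defensive.
Import Order.TTheory GRing.Theory Num.Theory.
Local Open Scope classical_set_scope.
Local Open Scope ring_scope.

(* Since L commutes with S, the matrix of L + S^gamma M_u is translation
   invariant up to the potential.  Hence, if x is supported in the window
   m..m+N-1, H(u)^+ x is the translate by m of a fixed finitely supported
   vector g that depends only on x and on the word u(m..m+N-1), truncated to
   the rows of the half axis; as g vanishes below row -w, nothing is cut off
   once m >= w, and ||H(u)^+ x|| can only grow with m up to m = w.  Given a
   test vector x for nu_N(H(b)^+) starting at m, the word b(m..m+N-1) occurs
   in c at some k; translating x to k gives a test vector for nu_N(H(c)^+) of
   no larger norm: if m >= w its image is at most the untruncated g, and if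
   m < w one may take k = m because b and c agree on 1..w+N-1. *)

Definition supported_below {V : zmodType} (M : nat) (x : nat -> V) : Prop :=
  forall n, (M <= n)%N -> x n = 0.

Definition shiftv {V : zmodType} (s : nat) (x : nat -> V) : nat -> V :=
  fun j => if (s <= j)%N then x (j - s)%N else 0.

Lemma limn_series_supported (K : numFieldType) (f : nat -> K) M :
  supported_below M f -> limn (series f) = \sum_(0 <= k < M) f k.
Proof.
move=> f0; apply: (lim_near_cst (@norm_hausdorff _ K^o)); near=> n.
have Mn : (M <= n)%N by near: n; exists M.
rewrite /series /= (@big_cat_nat _ _ _ M 0 n _ _ (leq0n M) Mn) /=.
rewrite [X in _ + X]big_nat_cond [X in _ + X]big1 ?addr0 //.
by move=> i /andP[/andP[/f0 ->]].
Unshelve. all: end_near. Qed.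

Section Shift.
Variable V : zmodType.

Lemma supported_below_shiftv s M (x : nat -> V) :
  supported_below M x -> supported_below (s + M) (shiftv s x).
Proof. by move=> x0 n sMn; rewrite /shiftv; case: ifP => // _; apply: x0; lia.
Qed.

Lemma sum_shiftv (W : zmodType) (G : nat -> V -> W) s M (x : nat -> V) :
  (forall j, G j 0 = 0) ->
  \sum_(0 <= j < s + M) G j (shiftv s x j) = \sum_(0 <= j < M) G (j + s)%N (x j).
Proof.
move=> G0; rewrite (@big_cat_nat _ _ _ s 0 (s + M) _ _ (leq0n s)) ?leq_addr //=.
rewrite big_nat_cond big1 ?add0r; last first.
  by move=> j /andP[/andP[_ js] _]; rewrite /shiftv leqNgt js.
rewrite -{1}(add0n s) big_addn addKn; apply: eq_bigr => j _.
by rewrite /shiftv leq_addl addnK.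
Qed.

End Shift.

Section SequenceSpace.
Variable R : realType.
Local Notation C := R[i].

Lemma modsq0 : modsq (0 : C) = 0.
Proof. by rewrite /modsq /= expr0n /= addr0. Qed.

Lemma modsq_ge0 (z : C) : 0 <= modsq z.
Proof. by rewrite /modsq addr_ge0 // sqr_ge0. Qed.

Lemma l2norm_supported (x : nat -> C) M : supported_below M x ->
  l2norm x = Num.sqrt (\sum_(0 <= k < M) modsq (x k)).
Proof.
by move=> x0; rewrite /l2norm (limn_series_supported (M := M)) // => n /x0 ->;
  rewrite modsq0.
Qed.

Lemma matapply_supported (T : nat -> nat -> C) (x : nat -> C) M i :
  supported_below M x -> matapply T x i = \sum_(0 <= j < M) T i j * x j.
Proof.
by move=> x0; rewrite /matapply (limn_series_supported (M := M)) // => n /x0 ->;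
  rewrite mulr0.
Qed.

Lemma l2norm_shiftv s (x : nat -> C) M : supported_below M x ->
  l2norm (shiftv s x) = l2norm x.
Proof.
move=> x0; rewrite (l2norm_supported x0).
rewrite (l2norm_supported (supported_below_shiftv (s := s) x0)).
by rewrite (sum_shiftv (G := fun _ => @modsq R)) // => _; rewrite modsq0.
Qed.

Lemma l2norm_neq0_support (x : nat -> C) : l2norm x != 0 -> exists j, x j != 0.
Proof.
move=> x_neq0; apply/not_existsP => /= x_eq0; move: x_neq0.
rewrite (l2norm_supported (M := 0)) ?big_geq ?sqrtr0 ?eqxx // => n _.
by apply/eqP/negPn/negP; exact: x_eq0.
Qed.

Lemma diam_supp_lt_shiftv s N (x : nat -> C) : supported_below N x ->
  diam_supp_lt (shiftv s x) N.
Proof.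
move=> x0; have supp p : shiftv s x p != 0 -> (s <= p)%N && (p < s + N)%N.
  rewrite /shiftv; case: ifP => [_|]; last by rewrite eqxx.
  by case: (ltnP p (s + N)) => // Np; rewrite x0 ?eqxx //; lia.
by move=> p q /supp/andP[? ?] /supp/andP[? ?]; lia.
Qed.

Lemma shiftv_decomposition N (x : nat -> C) : diam_supp_lt x N ->
  (exists j, x j != 0) -> exists m y, supported_below N y /\ x = shiftv m y.
Proof.
move=> xd x_neq0; case: (ex_minnP x_neq0) => m xm m_min.
have supp j : x j != 0 -> (m <= j)%N && (j < m + N)%N.
  by move=> xj; rewrite m_min //=; have := xd j m xj xm; lia.
exists m, (fun j => if (j < N)%N then x (m + j)%N else 0); split.
  by move=> n Nn; rewrite ltnNge Nn.
apply: funext => j; rewrite /shiftv.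
have [xj0|/supp/andP[mj jmN]] := eqVneq (x j) 0; last first.
  by rewrite mj subnKC // ifT //; lia.
by case: ifP => // mj; case: ifP => // _; rewrite subnKC.
Qed.

Lemma unit_vector_small_support N : (0 < N)%N ->
  exists x : nat -> C, l2norm x = 1 /\ diam_supp_lt x N.
Proof.
move=> N0; exists (fun j => if j == 0%N then 1 else 0); split.
  rewrite (l2norm_supported (M := 1)) => [|[|n]] //.
  by rewrite big_nat1 /modsq /= expr1n expr0n /= addr0 sqrtr1.
by move=> [|p] [|q] //=; rewrite eqxx.
Qed.

Lemma nu_le_l2norm N (T : nat -> nat -> C) x :
  l2norm x = 1 -> diam_supp_lt x N ->
  nu N T <= l2norm (matapply T x).
Proof.
move=> x1 xd; apply: ge_inf; last by exists x.
by exists 0 => _ [y _ <-]; rewrite /l2norm sqrtr_ge0.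
Qed.

End SequenceSpace.

Section Window.
Variable R : numDomainType.

Definition sum_window (h : int -> R) (s T : nat) : R :=
  \sum_(0 <= i < s + T) h (i%:Z - s%:Z).

Lemma sum_windowS h s T : sum_window h s.+1 T = h (- s.+1%:Z) + sum_window h s T.
Proof.
rewrite /sum_window addSn big_nat_recl //; congr (_ + _); first by congr h; lia.
by apply: eq_bigr => i _; congr h; lia.
Qed.

Lemma sum_window_le_add h s d T : (forall t, 0 <= h t) ->
  sum_window h s T <= sum_window h (s + d) T.
Proof.
move=> h_ge0; elim: d => [|d IH]; first by rewrite addn0.
by rewrite addnS sum_windowS (le_trans IH) // lerDr.
Qed.

Lemma sum_window_saturated h w s T : (forall t, t < - w%:Z -> h t = 0) ->
  (w <= s)%N -> sum_window h s T = sum_window h w T.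
Proof.
move=> h0 /subnKC <-; elim: (s - w)%N => [|d IH]; first by rewrite addn0.
by rewrite addnS sum_windowS h0 ?add0r //; lia.
Qed.

Lemma sum_window_le_saturated h w k m T : (forall t, 0 <= h t) ->
  (forall t, t < - w%:Z -> h t = 0) -> (w <= m)%N ->
  sum_window h k T <= sum_window h m T.
Proof.
move=> h_ge0 h0 wm; rewrite (sum_window_saturated _ h0 wm).
by rewrite -(sum_window_saturated T h0 (leq_addl k w)) sum_window_le_add.
Qed.

End Window.

Section HalfAxisOperator.
Variable R : realType.
Local Notation C := R[i].
Variables (Lm : int -> int -> C) (gamma : int).

Definition Hcol_banded (w : nat) (u : nat -> C) : Prop :=
  forall (i : int) (j : nat), w%:Z < `|i - j.+1%:Z| ->
    Lm i j.+1%:Z + (if i - j.+1%:Z == gamma then u j else 0) = 0.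

Lemma Hcol_banded_extends w u ut : extends ut u ->
  (forall i j : int, w%:Z < `|i - j| -> Hz Lm gamma ut i j = 0) ->
  Hcol_banded w u.
Proof. by move=> ext band i j ij; rewrite -ext; apply: band. Qed.

Hypothesis LmS : forall i j : int, Lm i (j + 1) = Lm (i - 1) j.

Lemma Lm_shift p q (n : nat) : Lm (p + n%:Z) (q + n%:Z) = Lm p q.
Proof.
elim: n => [|n IH]; first by rewrite !addr0.
have addSz k : k + n.+1%:Z = k + n%:Z + 1 by lia.
by rewrite !addSz LmS addrK.
Qed.

Variable N : nat.

Definition window_apply (a x : nat -> C) (t : int) : C :=
  \sum_(0 <= j < N)
    (Lm (t + 1) (j%:Z + 1) + (if t - j%:Z == gamma then a j else 0)) * x j.

Lemma Hplus_shiftv u a x s i : supported_below N x ->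
  (forall j, (j < N)%N -> u (s + j)%N = a j) ->
  matapply (Hplus Lm gamma u) (shiftv s x) i = window_apply a x (i%:Z - s%:Z).
Proof.
move=> x0 ua.
rewrite (matapply_supported _ _ (supported_below_shiftv (s := s) x0)).
rewrite (sum_shiftv (G := fun j y => Hplus Lm gamma u i j * y)) => [|j];
  last exact: mulr0.
apply: eq_big_nat => j /andP[_ jN].
rewrite /Hplus addnC ua //.
have -> : i.+1%:Z = i%:Z - s%:Z + 1 + s%:Z by lia.
have -> : (s + j).+1%:Z = j%:Z + 1 + s%:Z by lia.
have -> : i%:Z - s%:Z + 1 + s%:Z - (j%:Z + 1 + s%:Z) = i%:Z - s%:Z - j%:Z by lia.
by rewrite Lm_shift.
Qed.

Lemma window_apply_eq0 u w m a x t : Hcol_banded w u ->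
  (forall j, (j < N)%N -> a j = u (m + j)%N) ->
  (t < - w%:Z) || (N%:Z + w%:Z <= t) -> window_apply a x t = 0.
Proof.
move=> band au tw; rewrite /window_apply big_nat_cond big1 //.
move=> j /andP[/andP[_ jN] _].
rewrite au // -(Lm_shift _ _ m).
have -> : j%:Z + 1 + m%:Z = (m + j).+1%:Z by lia.
have -> : t - j%:Z = t + 1 + m%:Z - (m + j).+1%:Z by lia.
by rewrite band ?mul0r //; case/orP: tw; lia.
Qed.

Lemma l2norm_Hplus_shiftv u a x s w : supported_below N x ->
  (forall j, (j < N)%N -> u (s + j)%N = a j) ->
  (forall t, N%:Z + w%:Z <= t -> window_apply a x t = 0) ->
  l2norm (matapply (Hplus Lm gamma u) (shiftv s x)) =
  Num.sqrt (sum_window (fun t => modsq (window_apply a x t)) s (N + w)).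
Proof.
move=> x0 ua g0; rewrite (l2norm_supported (M := s + (N + w))) => [|n sn].
  by congr Num.sqrt; apply: eq_bigr => i _; rewrite (Hplus_shiftv i x0 ua).
by rewrite (Hplus_shiftv n x0 ua) g0 ?modsq0 //; lia.
Qed.

End HalfAxisOperator.

Lemma subword_occurrence (R : realType) (b c : nat -> R[i]) w N m :
  (forall k : nat, (k < w + N - 1)%N -> b k = c k) ->
  subwords N b `<=` subwords N c ->
  exists k, (forall j, (j < N)%N -> c (k + j)%N = b (m + j)%N) /\
            ((m < w)%N -> k = m).
Proof.
move=> bc bc_words; case: (ltnP m w) => [mw|wm].
  by exists m; split=> // j jN; rewrite bc //; lia.
have [k _ ck] : subwords N c (mkseq (fun j => b (m + j)%N) N).
  by apply: bc_words; exists m.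
exists k; split=> [j jN|]; last lia.
by have := congr1 (nth 0 ^~ j) ck; rewrite !nth_mkseq.
Qed.

Section Comparison.
Variable R : realType.
Local Notation C := R[i].
Variables (Lm : int -> int -> C) (gamma : int) (b c : nat -> C) (w N : nat).
Hypothesis LmS : forall i j : int, Lm i (j + 1) = Lm (i - 1) j.
Hypothesis b_banded : Hcol_banded Lm gamma w b.
Hypothesis bc : forall k : nat, (k < w + N - 1)%N -> b k = c k.
Hypothesis bc_words : subwords N b `<=` subwords N c.

Lemma nu_Hplus_le_l2norm x : l2norm x = 1 -> diam_supp_lt x N ->
  nu N (Hplus Lm gamma c) <= l2norm (matapply (Hplus Lm gamma b) x).
Proof.
move=> x1 xd.
have [|m [y [y0 xE]]] := shiftv_decomposition xd.
  by apply: l2norm_neq0_support; rewrite x1 oner_neq0.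
subst x.
have [k [ck km]] := subword_occurrence m bc bc_words.
pose a j := b (m + j)%N.
have g0 t := window_apply_eq0 LmS (a := a) (t := t) y b_banded (fun _ _ => erefl).
have y1 : l2norm (shiftv k y) = 1.
  by rewrite -x1 !(l2norm_shiftv _ y0).
have y_small := diam_supp_lt_shiftv (s := k) y0.
apply: le_trans (nu_le_l2norm (Hplus Lm gamma c) y1 y_small) _.
have g_hi t : N%:Z + w%:Z <= t -> window_apply Lm gamma N a y t = 0.
  by move=> tw; apply: g0; rewrite tw orbT.
rewrite (l2norm_Hplus_shiftv LmS (a := a) y0 ck g_hi).
rewrite (l2norm_Hplus_shiftv LmS (u := b) (s := m) y0 (fun _ _ => erefl) g_hi).
apply: ler_wsqrtr; case: (ltnP m w) => [mw|wm]; first by rewrite km.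
apply: sum_window_le_saturated wm => t; first exact: modsq_ge0.
by move=> tw; rewrite g0 ?tw ?modsq0.
Qed.

End Comparison.

Theorem proposition4p8 (R : realType) (Sigma : set R[i])
  (Lm : int -> int -> R[i]) (gamma : int) (b c : nat -> R[i]) (w N : nat) :
  (* Sigma is a nonempty compact subset of C *)
  Sigma !=set0 -> compact Sigma ->
  (* L is a band operator on l^2(Z) (given by its matrix Lm) *)
  (exists w0 : nat, forall i j : int, w0%:Z < `|i - j| -> Lm i j = 0) ->
  (* L S = S L, as matrices: (LS)_{ij} = L_{i,j+1}, (SL)_{ij} = L_{i-1,j} *)
  (forall i j : int, Lm i (j + 1) = Lm (i - 1) j) ->
  (* b, c in Sigma^N *)
  (forall k, Sigma (b k)) -> (forall k, Sigma (c k)) ->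
  (* w is a band-width: entries of the matrix of L + S^gamma M_ut vanish
     for |i - j| > w, for every extension ut in Sigma^Z of b or of c *)
  (forall (u : nat -> R[i]) (ut : int -> R[i]), (u = b \/ u = c) ->
     (forall n, Sigma (ut n)) -> extends ut u ->
     forall i j : int, w%:Z < `|i - j| -> Hz Lm gamma ut i j = 0) ->
  (* N in N = {1,2,...} *)
  (0 < N)%N ->
  (* b|_{1..w+N-1} = c|_{1..w+N-1} *)
  (forall k : nat, (k < w + N - 1)%N -> b k = c k) ->
  (* W_N(b) is contained in W_N(c) *)
  subwords N b `<=` subwords N c ->
  nu N (Hplus Lm gamma c) <= nu N (Hplus Lm gamma b).
Proof.
move=> [s0 Ss0] _ _ LmS Sb _ band N0 bc bc_words.
pose ut n := if 0 < n then b `|n|.-1 else s0.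
have ext : extends ut b by [].
have Sut n : Sigma (ut n) by rewrite /ut; case: ifP.
have b_banded := Hcol_banded_extends ext (band b ut (or_introl erefl) Sut ext).
apply: lb_le_inf.
  have [x [x1 xd]] := unit_vector_small_support R N0.
  by exists (l2norm (matapply (Hplus Lm gamma b) x)), x.
move=> _ [x [x1 xd] <-].
exact (nu_Hplus_le_l2norm LmS b_banded bc bc_words x1 xd).
Qed.
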